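(* Let $p$ be a prime, $m$ a positive integer, let $e,k$ be integers with $e\geq2$ and $1\leq k\leq e-1$, and let $b\ge2$ be an integer. If $0\leq i\leq p^{e-k-1}$ is such that $b+i\leq p^{e-k}$ and $i\leq b$, then $$d_b\big(\mathcal{C}_{p^e-p^{e-k}+i}\big)=p^k(b+i).$$
   Context: For $0\le t\le p^e$, $\mathcal{C}_t$ denotes the cyclic code $\langle (x-1)^t\rangle\subseteq \mathbb{F}_{p^m}[x]/\langle x^{p^e}-1\rangle$, with polynomials identified with their coefficient vectors in $\mathbb{F}_{p^m}^{p^e}$. For $c\in\mathbb{F}_{p^m}^{n}$, $\pi_b(c)$ is the list of the $n$ cyclically consecutive $b$-tuples $(c_j,\dots,c_{j+b-1})$ (indices mod $n$), $d_b(c,c')=d_H(\pi_b(c),\pi_b(c'))$, and $d_b(\mathcal{C})$ is the minimum of $d_b(c,c')$ over distinct $c,c'\in\mathcal{C}$. *)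

From HB Require Import structures.
From mathcomp Require Import all_boot all_order all_algebra.
Set Implicit Arguments. Unset Strict Implicit. Unset Printing Implicit Defensive.
Import GRing.Theory.
Local Open Scope ring_scope.

(* The index (k mod n) as an element of 'I_n (n > 0 is witnessed by i). *)
Definition cidx (n : nat) (i : 'I_n) (k : nat) : 'I_n :=
  Ordinal (ltn_pmod k (leq_ltn_trans (leq0n i) (ltn_ord i))).

(* Cyclic code C_t = <(x-1)^t> in F[x]/<x^n - 1>, as a predicate on
   coefficient vectors: c is the coefficient vector of ((x-1)^t * g) mod (x^n-1)
   for some polynomial g. *)
Definition in_Ct (F : fieldType) (n t : nat) (c : {ffun 'I_n -> F}) : Prop :=
  exists g : {poly F},
    forall i : 'I_n, c i = ((('X - 1) ^+ t * g) %% ('X ^+ n - 1))`_i.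

Definition bsym (F : fieldType) (n b : nat) (c : {ffun 'I_n -> F}) (j : 'I_n)
  : {ffun 'I_b -> F} :=
  [ffun l : 'I_b => c (cidx j (j + l)%N)].

Definition bdist (F : finFieldType) (n b : nat) (c c' : {ffun 'I_n -> F}) : nat :=
  #|[set j : 'I_n | bsym b c j != bsym b c' j]|.

Definition min_bdist_is (F : finFieldType) (n b : nat)
  (C : {ffun 'I_n -> F} -> Prop) (d : nat) : Prop :=
  (exists c c', [/\ C c, C c', c != c' & bdist b c c' = d]) /\
  (forall c c', C c -> C c' -> c != c' -> (d <= bdist b c c')%N).

From HB Require Import structures.
From mathcomp Require Import all_boot all_order all_algebra all_field zify.
Set Implicit Arguments. Unset Strict Implicit. Unset Printing Implicit Defensive.
Import GRing.Theory.

(* Let n = p^e, N = p^(e-k) and t = n - N + i, so that x^n - 1 = (x - 1)^n and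
   x^N - 1 = (x - 1)^N in characteristic p.  The difference D of two distinct
   codewords is a nonzero multiple of (x - 1)^t of degree < n.  As (x - 1)^n
   divides (x^N - 1)(x - 1)^t, the coefficient vector of D is N-periodic; as every
   cyclic rotation of D is again a nonzero multiple of (x - 1)^t, hence of degree
   at least t, any N - i cyclically consecutive coefficients contain a nonzero one.
   So in a period starting with a b-window free of nonzero coefficients (if there
   is none, all N >= b + i windows of a period count), the first nonzero position x
   is followed by a nonzero position y >= x + i in the same period; the b windows containing x and the min(y - x, b) >= i windows containing
   y but not x show that each of the n/N periods contributes at least b + i to the
   b-symbol distance.  The bound is attained by (x - 1)^t itself, which equals
   (x - 1)^i (1 + x^N + ... + x^(n-N)), so that its nonzero coefficients sit at
   positions congruent to 0, ..., i modulo N. *)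

Lemma count_iota_sub (f : pred nat) a l a' l' :
  a <= a' -> a' + l' <= a + l -> count f (iota a' l') <= count f (iota a l).
Proof.
move=> le_aa' le_end.
have -> : l = a' - a + (l' + (a + l - (a' + l'))) by lia.
rewrite !iotaD !count_cat subnKC //.
exact: leq_trans (leq_addr _ _) (leq_addl _ _).
Qed.

Section PeriodicCount.
Variables (f : pred nat) (N : nat).
Hypothesis f_periodic : forall x, f (x + N) = f x.

Lemma count_iota_periodic z : count f (iota z N) = count f (iota 0 N).
Proof.
elim: z => // z <-; apply/eqP; rewrite -(eqn_add2l (f z)).
have := congr1 (count f) (iotaD z N 1); rewrite addn1 count_cat /= f_periodic.
by rewrite addn0 => ->; rewrite addnC.
Qed.

Lemma count_iota_periodicM q : count f (iota 0 (q * N)) = q * count f (iota 0 N).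
Proof.
elim: q => // q IH; rewrite mulSn iotaD count_cat add0n.
have -> : iota N (q * N) = map (addn N) (iota 0 (q * N)) by rewrite -iotaDl addn0.
rewrite count_map (eq_count (a2 := f)) ?IH // => x /=.
by rewrite addnC f_periodic.
Qed.

End PeriodicCount.

Section Windows.
Variables (nz : pred nat) (b : nat).
Local Notation hits := (fun j => has nz (iota j b)).

Lemma count_hits_covering x a l :
  nz x -> a + l <= x.+1 -> x < a + b -> count hits (iota a l) = l.
Proof.
move=> nz_x le_al lt_xab; apply/eqP; rewrite -{2}(size_iota a l) -all_count.
apply/allP => j; rewrite mem_iota => /andP[le_aj lt_jal].
by apply/hasP; exists x; rewrite ?mem_iota //; lia.
Qed.

Lemma count_hits_two_points a L x y i : i <= b -> nz x -> nz y ->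
  a + b <= x.+1 -> x + i <= y -> y < a + L -> b + i <= count hits (iota a L).
Proof.
move=> le_ib nz_x nz_y le_bx le_xy lt_yL.
apply: leq_trans (count_iota_sub hits (a' := x.+1 - b) (l' := b + (y - x)) _ _);
  [|lia|lia].
rewrite iotaD count_cat (count_hits_covering nz_x) ?leq_add2l; [|lia|lia].
pose d := minn (y - x) b.
apply: leq_trans (count_iota_sub hits (a' := y.+1 - d) (l' := d) _ _); [|lia|lia].
rewrite (count_hits_covering nz_y); lia.
Qed.

Section Periodic.
Variables (N i : nat).
Hypothesis nz_periodic : forall x, nz (x + N) = nz x.
Hypothesis nz_dense : forall a, has nz (iota a (N - i)).
Hypotheses (le_ib : i <= b) (le_biN : b + i <= N).

Lemma hits_periodic x : hits (x + N) = hits x.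
Proof.
by rewrite /= addnC iotaDl has_map; apply: eq_has => y /=; rewrite addnC nz_periodic.
Qed.

Lemma count_hits_period : b + i <= count hits (iota 0 N).
Proof.
have [|/allPn[z _ no_hit]] := boolP (all hits (iota 0 N)).
  by rewrite all_count size_iota => /eqP->.
rewrite -(count_iota_periodic hits_periodic z).
have ex_s : exists s, nz (z + s).
  have /hasP[w] := nz_dense z; rewrite mem_iota => /andP[le_zw _] nz_w.
  by exists (w - z); rewrite subnKC.
have [s nz_s first_s] := ex_minnP ex_s.
have le_bs : b <= s.
  rewrite leqNgt; apply: contra no_hit => lt_sb.
  by apply/hasP; exists (z + s); rewrite ?mem_iota //; lia.
have [y nz_y /andP[le_y lt_y]] : exists2 y, nz y & z + s + i <= y < z + N.
  have /hasP[w] := nz_dense (z + s + i); rewrite mem_iota => /andP[le_w lt_w] nz_w.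
  have [lt_wN | le_Nw] := ltnP w (z + N); first by exists w; rewrite // le_w.
  have nz_w' : nz (z + (w - N - z)) by rewrite -nz_periodic; congr nz: nz_w; lia.
  by have := first_s _ nz_w'; lia.
apply: (count_hits_two_points le_ib nz_s nz_y); lia.
Qed.

Lemma count_hits_lower q : q * (b + i) <= count hits (iota 0 (q * N)).
Proof.
by rewrite (count_iota_periodicM hits_periodic) leq_mul2l count_hits_period orbT.
Qed.

End Periodic.

Lemma count_hits_upper N i q : b + i <= N ->
  (forall x, nz x -> x %% N <= i) -> count hits (iota 0 (q * N)) <= q * (b + i).
Proof.
move=> le_biN nz_mod.
pose low x := x %% N < b + i.
have low_periodic x : low (x + N) = low x by rewrite /low modnDr.
have hits_low j : hits j -> low (b.-1 + j).
  case/hasP => x; rewrite mem_iota => /andP[le_jx lt_xjb] /nz_mod le_xi.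
  rewrite /low (_ : b.-1 + j = x + (b.-1 + j - x)); last by lia.
  by rewrite -modnDml modn_small; lia.
apply: leq_trans (sub_count hits_low _) _.
rewrite count_iota_periodicM => [|x]; last by rewrite addnA low_periodic.
have -> : count (fun j => low (b.-1 + j)) (iota 0 N) = count low (iota 0 N).
  by rewrite -(count_iota_periodic low_periodic b.-1) -{2}(addn0 b.-1) iotaDl count_map.
rewrite leq_mul2l.
have -> : iota 0 N = iota 0 (b + i) ++ iota (b + i) (N - (b + i)).
  by rewrite -iotaD subnKC.
rewrite count_cat; apply/orP; right.
have -> : count low (iota (b + i) (N - (b + i))) = 0.
  apply/eqP; rewrite -leqn0 leqNgt -has_count; apply/hasPn => x.
  by rewrite mem_iota /low => /andP[le_x lt_x]; rewrite modn_small; lia.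
by rewrite addn0 -{2}(size_iota 0 (b + i)) count_size.
Qed.
End Windows.

Section CyclicModulus.
Local Open Scope ring_scope.
Variables (F : fieldType) (n : nat).
Hypothesis n_gt0 : (0 < n)%N.
Local Notation M := ('X^n - 1 : {poly F}).

Lemma size_XnsubC1 : size M = n.+1.
Proof. exact: size_XnsubC. Qed.

Lemma size_modp_XnsubC1 (D : {poly F}) : (size (D %% M)%R <= n)%N.
Proof.
by rewrite -ltnS -size_XnsubC1 ltn_modp -size_poly_eq0 size_XnsubC1.
Qed.

Lemma modp_XnsubC1_Xn l : 'X^l %% M = 'X^(l %% n).
Proof.
have XnkE k : 'X^(k * n) = 1 + M * \sum_(j < k) 'X^n ^+ j.
  by rewrite -subrX1 mulnC exprM addrC subrK.
rewrite {1}(divn_eq l n) exprD XnkE mulrDl mul1r -mulrA modpD modp_mulr addr0.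
by rewrite modp_small // size_polyXn size_XnsubC1 ltnS ltn_mod.
Qed.

Lemma coef_modp_XnsubC1_XnM (D : {poly F}) s x : (size D <= n)%N ->
  (('X^s * D) %% M)`_((x + s) %% n) = D`_(x %% n).
Proof.
move=> le_Dn.
have DE : D = \sum_(l < size D) D`_l *: 'X^l by rewrite -poly_def coefK.
rewrite {1}DE [in RHS]DE mulr_sumr.
rewrite (big_morph (fun P => P %% M) (modpD M) (mod0p M)) !coef_sum.
apply: eq_bigr => l _; rewrite -scalerAr -exprD modpZl modp_XnsubC1_Xn !coefZ !coefXn.
by rewrite [(s + l)%N]addnC eqn_modDr (modn_small (leq_trans (ltn_ord l) le_Dn)).
Qed.

Lemma modp_XnsubC1_XnM_eq0 (D : {poly F}) s :
  (size D <= n)%N -> (('X^s * D) %% M == 0) = (D == 0).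
Proof.
move=> le_Dn; apply/eqP/eqP => [Q0|->]; last by rewrite mulr0 mod0p.
apply/polyP => y; rewrite coef0; have [lt_yn | le_ny] := ltnP y n.
  by have := coef_modp_XnsubC1_XnM s y le_Dn; rewrite Q0 coef0 modn_small.
by rewrite nth_default // (leq_trans le_Dn).
Qed.

Lemma coef_periodic_modp_XnsubC1 (D : {poly F}) N :
  (size D <= n)%N -> M %| ('X^N - 1) * D -> forall x, D`_((x + N) %% n) = D`_(x %% n).
Proof.
move=> le_Dn dvdMD x.
have XN_D : ('X^N * D) %% M = D.
  rewrite -[X in X * D](subrK 1) mulrDl mul1r modpD (modp_eq0 dvdMD) add0r.
  by rewrite modp_small // size_XnsubC1 ltnS.
by rewrite -{1}XN_D coef_modp_XnsubC1_XnM.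
Qed.

Lemma rotate_zero_run_XnsubC1 (D : {poly F}) a g :
  (size D <= n)%N -> (g <= n)%N -> (forall l, (l < g)%N -> D`_((a + l) %% n) = 0) ->
  exists s, (size (('X^s * D) %% M)%R <= n - g)%N.
Proof.
move=> le_Dn le_gn zero_run; exists (n - g + (n - a %% n))%N.
apply/leq_sizeP => j le_j; have [lt_jn | le_nj] := ltnP j n; last first.
  by rewrite nth_default // (leq_trans (size_modp_XnsubC1 _)).
have -> : j = ((a + (j - (n - g)) + (n - g + (n - a %% n))) %% n)%N.
  rewrite {1}(divn_eq a n); have := ltn_mod a n; rewrite n_gt0.
  move: (a %/ n)%N (a %% n)%N => k r lt_rn.
  have -> : (k * n + r + (j - (n - g)) + (n - g + (n - r)) = k.+1 * n + j)%N by lia.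
  by rewrite modnMDl modn_small.
by rewrite coef_modp_XnsubC1_XnM // zero_run //; lia.
Qed.

Lemma has_coef_modp_XnsubC1 (A D : {poly F}) :
  D != 0 -> (size D <= n)%N -> A %| M -> A %| D ->
  forall a, has (fun x => D`_(x %% n) != 0) (iota a (n.+1 - size A)).
Proof.
move=> D0 le_Dn dvdAM dvdAD a; apply/negPn/negP => /hasPn zero_run.
have size_A : (0 < size A)%N.
  by rewrite size_poly_gt0; apply: contraNneq D0 => A0; rewrite -dvd0p -A0.
have le_gn : (n.+1 - size A <= n)%N by lia.
have zero_coef l : (l < n.+1 - size A)%N -> D`_((a + l) %% n) = 0.
  by move=> lt_l; apply/eqP/negPn/zero_run; rewrite mem_iota; lia.
have [s size_Q] := rotate_zero_run_XnsubC1 le_Dn le_gn zero_coef.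
have Q0 : ('X^s * D) %% M != 0 by rewrite modp_XnsubC1_XnM_eq0.
have dvdAQ : A %| ('X^s * D) %% M by rewrite -dvdp_mod // dvdp_mull.
have le_AQ : (size A <= size (('X^s * D) %% M)%R)%N := dvdp_leq Q0 dvdAQ.
lia.
Qed.
End CyclicModulus.

Section Xsub1Powers.
Local Open Scope ring_scope.
Variable F : fieldType.

Lemma size_Xsub1_exp k : size (('X - 1) ^+ k : {poly F}) = k.+1.
Proof. by rewrite -polyC1 size_exp_XsubC. Qed.

Lemma Xsub1_exp_pchar p a : prime p -> p \in [pchar F] ->
  ('X - 1) ^+ (p ^ a)%N = 'X^(p ^ a)%N - 1 :> {poly F}.
Proof.
move=> p_pr pcharF.
have pchar_p : [pchar {poly F}].-nat (p ^ a)%N.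
  by rewrite pnatX (pnatE _ p_pr) pchar_poly pcharF.
by rewrite -[in RHS](subrK 1 'X) [in RHS]exprDn_pchar // expr1n addrK.
Qed.

End Xsub1Powers.

Lemma bdist_count_hits (F : finFieldType) n b (c c' : {ffun 'I_n -> F})
    (diff : pred nat) :
  (forall j : 'I_n, (c j != c' j) = diff j) ->
  bdist b c c' = count (fun j => has (fun x => diff (x %% n)) (iota j b)) (iota 0 n).
Proof.
move=> diffE; rewrite /bdist cardsE cardE /enum_mem -enumT size_filter.
rewrite -val_enum_ord count_map; apply: eq_count => j /=.
rewrite unfold_in /= -[RHS]negbK; congr negb.
have same_at (l : 'I_b) :
    (bsym b c j l == bsym b c' j l) = ~~ diff ((j + l) %% n).
  by rewrite !ffunE -[(j + l) %% n]/(val (cidx j (j + l))) -diffE negbK.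
apply/eqP/hasPn => [same x | nodiff].
  rewrite mem_iota => /andP[le_jx lt_x]; have lt_l : x - j < b by lia.
  by have := same_at (Ordinal lt_l); rewrite same eqxx /= subnKC.
by apply/ffunP => l; apply/eqP; rewrite same_at nodiff // mem_iota leq_addr /= ltn_add2l.
Qed.

Section BinomialCyclicCode.
Local Open Scope ring_scope.
Variables (F : finFieldType) (n N q b i : nat).
Hypotheses (n_gt0 : (0 < n)%N) (n_eq : n = (q * N)%N).
Hypothesis Xn_sub1 : 'X^n - 1 = ('X - 1) ^+ n :> {poly F}.
Hypothesis XN_sub1 : 'X^N - 1 = ('X - 1) ^+ N :> {poly F}.
Hypotheses (b_gt0 : (0 < b)%N) (le_ib : (i <= b)%N) (le_biN : (b + i <= N)%N).
Local Notation t := (n - N + i)%N.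
Local Notation M := ('X^n - 1 : {poly F}).

Lemma leq_Nn : (N <= n)%N.
Proof. by move: n_gt0; rewrite n_eq muln_gt0 => /andP[q_gt0 _]; rewrite leq_pmull. Qed.

Lemma Xsub1_exp_sum : ('X - 1) ^+ (n - N) = \sum_(r < q) 'X^N ^+ r :> {poly F}.
Proof.
apply: (@mulfI _ (('X - 1) ^+ N)); first by rewrite -size_poly_eq0 size_Xsub1_exp.
by rewrite -exprD subnKC ?leq_Nn // -Xn_sub1 -XN_sub1 -subrX1 -exprM mulnC -n_eq.
Qed.

Lemma coef_Xsub1_exp_neq0 y : (('X - 1) ^+ t : {poly F})`_y != 0 -> (y %% N <= i)%N.
Proof.
apply: contraR; rewrite -ltnNge => lt_iy.
rewrite exprD Xsub1_exp_sum mulr_suml coef_sum big1 // => r _.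
rewrite -exprM coefXnM; case: ltnP => // le_Nry.
apply: nth_default; rewrite size_Xsub1_exp.
apply: leq_trans lt_iy _; rewrite -{1}(subnK le_Nry) addnC mulnC modnMDl; exact: leq_mod.
Qed.

Lemma dvdp_Xsub1_exp_XnsubC1 : ('X - 1) ^+ t %| M.
Proof. by rewrite Xn_sub1 dvdp_exp2l //; have := leq_Nn; lia. Qed.

Lemma leq_bdist_in_Ct (c c' : {ffun 'I_n -> F}) :
  in_Ct t c -> in_Ct t c' -> c != c' -> (q * (b + i) <= bdist b c c')%N.
Proof.
case=> g cE [g' c'E] neq_cc'.
pose D := (('X - 1) ^+ t * (g - g')) %% M.
have diffE j : (c j != c' j) = (D`_j != 0).
  by rewrite cE c'E /D mulrBr modpD modpN coefD coefN subr_eq0.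
have D0 : D != 0.
  apply/eqP => D0; move/eqP: neq_cc'; apply; apply/ffunP => j; apply/eqP.
  by rewrite -[_ == _]negbK diffE D0 coef0 eqxx.
have size_D : (size D <= n)%N by apply: size_modp_XnsubC1.
have dvd_tD : ('X - 1) ^+ t %| D by rewrite -dvdp_mod ?dvdp_Xsub1_exp_XnsubC1 ?dvdp_mulIl.
rewrite (bdist_count_hits b (diff := fun x => D`_x != 0) diffE) [in iota 0 n]n_eq.
apply: count_hits_lower => // [x | a].
  congr (_ != 0); apply: coef_periodic_modp_XnsubC1 => //.
  rewrite XN_sub1 Xn_sub1; apply: dvdp_trans (dvdp_mul (dvdpp _) dvd_tD).
  by rewrite -exprD dvdp_exp2l //; lia.
have := has_coef_modp_XnsubC1 n_gt0 D0 size_D dvdp_Xsub1_exp_XnsubC1 dvd_tD a.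
by rewrite size_Xsub1_exp (_ : n.+1 - t.+1 = N - i)%N //; have := leq_Nn; lia.
Qed.

Lemma min_bdist_in_Ct : min_bdist_is b (@in_Ct F n t) (q * (b + i)).
Proof.
split; last exact: leq_bdist_in_Ct.
pose A : {poly F} := ('X - 1) ^+ t.
have lt_tn : (t < n)%N by have := leq_Nn; lia.
have A_t : A`_t = 1.
  have /monicP : A \is monic by apply: monic_exp; rewrite -polyC1 monicXsubC.
  by rewrite lead_coefE size_Xsub1_exp.
pose c := [ffun j : 'I_n => A`_j]; pose c0 := [ffun j : 'I_n => 0 : F].
have cA : in_Ct t c.
  exists 1 => j; rewrite mulr1 modp_small ?ffunE // size_XnsubC1 //.
  by rewrite size_Xsub1_exp ltnS.
have c00 : in_Ct t c0 by exists 0 => j; rewrite mulr0 mod0p coef0 ffunE.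
have neq_cc0 : c != c0.
  apply/eqP => /ffunP /(_ (Ordinal lt_tn)); rewrite !ffunE A_t.
  by apply/eqP; exact: oner_neq0.
exists c, c0; split=> //; apply/eqP; rewrite eqn_leq leq_bdist_in_Ct // andbT.
rewrite (bdist_count_hits b (diff := fun x => A`_x != 0)) => [|j]; last by rewrite !ffunE.
rewrite [in iota 0 n]n_eq; apply: count_hits_upper => // x /coef_Xsub1_exp_neq0.
by rewrite modn_dvdm // n_eq dvdn_mull.
Qed.

End BinomialCyclicCode.

Theorem theorem2p10 (p m e k b i : nat) (F : finFieldType) :
  prime p -> (0 < m)%N -> #|F| = (p ^ m)%N ->
  (2 <= e)%N -> (1 <= k)%N -> (k <= e - 1)%N -> (2 <= b)%N ->
  (i <= p ^ (e - k - 1))%N -> (b + i <= p ^ (e - k))%N -> (i <= b)%N ->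
  min_bdist_is b (@in_Ct F (p ^ e) (p ^ e - p ^ (e - k) + i))
    (p ^ k * (b + i))%N.
Proof.
move=> p_pr _ card_F le2e le1k le_k_e1 le2b _ le_biN le_ib.
have pcharF := card_finPcharP card_F p_pr.
have p_gt0 := prime_gt0 p_pr.
apply: min_bdist_in_Ct => //.
- by rewrite expn_gt0 p_gt0.
- by rewrite -expnD subnKC //; lia.
- exact/esym/(Xsub1_exp_pchar _ p_pr).
- exact/esym/(Xsub1_exp_pchar _ p_pr).
- lia.
Qed.
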